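(* Let $a>0$, $\tau>0$ with $\tau\le a$. Then $\Sigma:=\{\lambda\in\mathbb{C}:\ a\lambda+e^{-\lambda\tau}=0\}\subset\{\lambda\in\mathbb{C}:\ \Re\lambda<0\}$. *)

From Stdlib Require Import Reals.
From Coquelicot Require Import Coquelicot.
Open Scope R_scope.

Definition Cexp (z : C) : C :=
  (exp (Re z) * cos (Im z), exp (Re z) * sin (Im z)).

Definition Sigma (a tau : R) : C -> Prop :=
  fun l => Cplus (Cmult (RtoC a) l) (Cexp (Copp (Cmult l (RtoC tau)))) = RtoC 0.

(** Write [l = x + iy] and suppose [x >= 0], so that [e := exp (-x tau)] lies in [(0, 1]].
    The real part of the equation, [a x + e cos (y tau) = 0], rules out [y = 0].
    The imaginary part reads [a y = e sin (y tau)]; but for [y > 0] we have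
    [e sin (y tau) < y tau <= a y], and the case [y < 0] is symmetric since [sin] is odd. *)
From Stdlib Require Import Reals Lra Psatz.
From Coquelicot Require Import Coquelicot.
Open Scope R_scope.

Lemma exp_le_1 (x : R) : x <= 0 -> exp x <= 1.
Proof.
  intros Hx; rewrite <- exp_0.
  destruct (Req_dec x 0) as [-> | Hneq]; [lra |].
  left; apply exp_increasing; lra.
Qed.

Lemma scaled_sin_lt (e t : R) : 0 <= e <= 1 -> 0 < t -> e * sin t < t.
Proof.
  intros He Ht.
  pose proof (sin_lt_x t Ht) as Hsin.
  destruct (Rle_or_lt 0 (sin t)) as [Hpos | Hneg]; nra.
Qed.

Lemma Sigma_components (a tau x y : R) :
  Sigma a tau (x, y) ->
  a * x + exp (- (x * tau)) * cos (y * tau) = 0 /\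
  a * y - exp (- (x * tau)) * sin (y * tau) = 0.
Proof.
  intros H; unfold Sigma, Cexp in H.
  pose proof (f_equal fst H) as Hre; pose proof (f_equal snd H) as Him.
  simpl in Hre, Him.
  replace (- (x * tau - y * 0)) with (- (x * tau)) in Hre, Him by ring.
  replace (- (x * 0 + y * tau)) with (- (y * tau)) in Hre, Him by ring.
  rewrite cos_neg in Hre; rewrite sin_neg in Him.
  split; lra.
Qed.

Theorem lemma3p4 (a tau : R) (ha : 0 < a) (htau : 0 < tau) (hle : tau <= a) :
  forall l : C, Sigma a tau l -> Re l < 0.
Proof.
  intros [x y] Hl; simpl.
  destruct (Sigma_components a tau x y Hl) as [Hre Him].
  apply Rnot_le_lt; intros Hx.
  set (e := exp (- (x * tau))) in Hre, Him.
  assert (He : 0 < e <= 1).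
  { split; [apply exp_pos | apply exp_le_1; nra]. }
  destruct (Rtotal_order y 0) as [Hy | [-> | Hy]].
  - pose proof (scaled_sin_lt e (- (y * tau)) ltac:(lra) ltac:(nra)) as Hsin.
    rewrite sin_neg in Hsin; nra.
  - rewrite Rmult_0_l, cos_0 in Hre; nra.
  - pose proof (scaled_sin_lt e (y * tau) ltac:(lra) ltac:(nra)) as Hsin.
    nra.
Qed.
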